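(* Let $(\mathcal{G},d_\mathcal{G})$, $(\mathcal{X},d_\mathcal{X})$, $(\mathcal{Y},d_\mathcal{Y})$ be pseudo-metric spaces and let $\mathcal{H}$ be the class of $c_\mathcal{H}$-Lipschitz continuous graph embeddings from $(\mathcal{G},d_\mathcal{G})$ to $(\mathcal{X},d_\mathcal{X})$. Assume the loss function $\ell\colon\mathcal{X}\times\mathcal{Y}\to\mathbb{R}^+$ is $c_\ell$-Lipschitz with respect to $d_\infty$. Then, for every $\varepsilon>0$, graph learning algorithms for $\mathcal{H}$ are $\bigl(\mathcal{N}(\mathcal{G},d_\mathcal{G},\varepsilon/(2c_\mathcal{H}))\cdot\mathcal{N}(\mathcal{Y},d_\mathcal{Y},\varepsilon/2),\ c_\ell\varepsilon\bigr)$-robust.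
   Context: A pseudo-metric satisfies $d(x,x)=0$, symmetry and the triangle inequality. $d_\infty((x,y),(x',y'))=\max\{d_\mathcal{X}(x,x'),d_\mathcal{Y}(y,y')\}$. $f$ is $c$-Lipschitz if $d(f(x),f(x'))\le c\,d(x,x')$. $\mathcal{N}(\mathcal{X},d,\varepsilon)$ is the minimal cardinality of an $\varepsilon$-cover (a subset $C$ such that every point is within distance $\varepsilon$ of some point of $C$). Learning setup: $\mathcal{Z}=\mathcal{G}\times\mathcal{Y}$ with a distribution; a graph learning algorithm maps each sample $\mathcal{S}$ (finite i.i.d. collection from $\mathcal{Z}$) to $h_\mathcal{S}\in\mathcal{H}$. The algorithm is $(K,\varepsilon)$-robust if for all samples $\mathcal{S}$, $\mathcal{Z}$ can be partitioned into $K$ sets $C_i$ such that whenever $(G,y)\in\mathcal{S}\cap C_i$ and $(G',y')\in C_i$, $|\ell(h_\mathcal{S}(G),y)-\ell(h_\mathcal{S}(G'),y')|<\varepsilon$. *)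

From Stdlib Require Import Reals List.
Open Scope R_scope.

Definition pseudo_metric {T : Type} (d : T -> T -> R) : Prop :=
  (forall x, d x x = 0) /\
  (forall x y, d x y = d y x) /\
  (forall x y z, d x z <= d x y + d y z).

Definition d_inf {A B : Type} (dA : A -> A -> R) (dB : B -> B -> R)
  (p q : A * B) : R := Rmax (dA (fst p) (fst q)) (dB (snd p) (snd q)).

Definition lipschitz {A B : Type} (dA : A -> A -> R) (dB : B -> B -> R)
  (c : R) (f : A -> B) : Prop :=
  forall a a', dB (f a) (f a') <= c * dA a a'.

Definition dR (r s : R) : R := Rabs (r - s).

Definition is_cover {T : Type} (d : T -> T -> R) (eps : R) (C : list T) : Prop :=
  forall x, exists c, In c C /\ d x c < eps.

Definition covering_number {T : Type} (d : T -> T -> R) (eps : R) (n : nat) : Prop :=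
  (exists C, is_cover d eps C /\ length C = n) /\
  (forall C, is_cover d eps C -> (n <= length C)%nat).

(** For every sample S, Z = G * Y is partitioned into K sets
    (cell z < K is the index of the set containing z). *)
Definition robust {G X Y : Type} (l : X * Y -> R)
  (A : list (G * Y) -> G -> X) (K : nat) (eps : R) : Prop :=
  forall S : list (G * Y),
    exists cell : G * Y -> nat,
      (forall z, (cell z < K)%nat) /\
      (forall s z, In s S -> cell s = cell z ->
         Rabs (l (A S (fst s), snd s) - l (A S (fst z), snd z)) < eps).

(** An [r]-cover of size [n] of a pseudo-metric space splits it into [n] cells
    (points sharing a nearest-listed centre) of diameter less than [2 r].
    Crossing such partitions of [G] (radius [eps / (2 cH)]) and of [Y]
    (radius [eps / 2]) gives [nG * nY] cells of [G * Y]; on one cell the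
    embedded graphs are [eps]-close because the hypothesis is [cH]-Lipschitz,
    the labels are [eps]-close, and the [cl]-Lipschitz loss varies by less
    than [cl * eps]. *)

From Stdlib Require Import Reals List Lra Lia ClassicalEpsilon.
Open Scope R_scope.

Section CoverPartition.

Variables (T : Type) (d : T -> T -> R).
Hypothesis Hd : pseudo_metric d.

Lemma pseudo_metric_lt_via (x x' c : T) (r : R) :
  d x c < r -> d x' c < r -> d x x' < 2 * r.
Proof.
  destruct Hd as (_ & Hsym & Htri).
  intros Hx Hx'. pose proof (Htri x c x') as Hxcx'.
  rewrite (Hsym c x') in Hxcx'. lra.
Qed.

Lemma cover_partition (r : R) (C : list T) :
  is_cover d r C ->
  exists cell : T -> nat,
    (forall x, (cell x < length C)%nat) /\
    (forall x x', cell x = cell x' -> d x x' < 2 * r).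
Proof.
  intros HC.
  assert (Hnear : forall x, exists i, (i < length C)%nat /\ d x (nth i C x) < r).
  { intros x. destruct (HC x) as (c & Hc & Hxc).
    destruct (In_nth C c x Hc) as (i & Hi & <-). now exists i. }
  exists (fun x => proj1_sig (constructive_indefinite_description _ (Hnear x))).
  split.
  - intros x. now destruct (constructive_indefinite_description _ (Hnear x)) as (i & Hi & Hx).
  - intros x x'.
    destruct (constructive_indefinite_description _ (Hnear x)) as (i & Hi & Hx).
    destruct (constructive_indefinite_description _ (Hnear x')) as (i' & Hi' & Hx').
    simpl. intros <-.
    rewrite (nth_indep C x x') in Hx by exact Hi.
    exact (pseudo_metric_lt_via _ _ _ _ Hx Hx').
Qed.

End CoverPartition.

Lemma pair_code_lt (a b m n : nat) :
  (a < m)%nat -> (b < n)%nat -> (a * n + b < m * n)%nat.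
Proof.
  intros Ha Hb. assert (S a * n <= m * n)%nat by (apply Nat.mul_le_mono_r; lia).
  simpl in *. lia.
Qed.

Lemma pair_code_inj (a b a' b' n : nat) :
  (b < n)%nat -> (b' < n)%nat -> (a * n + b = a' * n + b')%nat -> a = a' /\ b = b'.
Proof.
  intros Hb Hb' Heq.
  assert (Hdiv : forall c e, (e < n)%nat -> ((c * n + e) / n = c)%nat).
  { intros c e He. rewrite Nat.div_add_l by lia. rewrite Nat.div_small by exact He. lia. }
  assert (a = a') as <- by now rewrite <- (Hdiv a b Hb), <- (Hdiv a' b' Hb'), Heq.
  split; [reflexivity | lia].
Qed.

Lemma lipschitz_lt {A B : Type} (dA : A -> A -> R) (dB : B -> B -> R)
  (c e : R) (f : A -> B) (a a' : A) :
  0 < c -> lipschitz dA dB c f -> dA a a' < e -> dB (f a) (f a') < c * e.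
Proof.
  intros Hc Hf Ha. pose proof (Hf a a').
  pose proof (Rmult_lt_compat_l c _ _ Hc Ha). lra.
Qed.

Lemma d_inf_lt {A B : Type} (dA : A -> A -> R) (dB : B -> B -> R)
  (a a' : A) (b b' : B) (e : R) :
  dA a a' < e -> dB b b' < e -> d_inf dA dB (a, b) (a', b') < e.
Proof. intros Ha Hb. now apply Rmax_lub_lt. Qed.

Theorem mainTheorem8
  (G X Y : Type)
  (dG : G -> G -> R) (dX : X -> X -> R) (dY : Y -> Y -> R)
  (HdG : pseudo_metric dG) (HdX : pseudo_metric dX) (HdY : pseudo_metric dY)
  (cH cl : R) (HcH : 0 < cH) (Hcl : 0 < cl)
  (l : X * Y -> R)
  (Hl_nonneg : forall p, 0 <= l p)
  (Hl_lip : lipschitz (d_inf dX dY) dR cl l)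
  (A : list (G * Y) -> G -> X)
  (HA : forall S, lipschitz dG dX cH (A S))
  (eps : R) (Heps : 0 < eps)
  (nG nY : nat)
  (HnG : covering_number dG (eps / (2 * cH)) nG)
  (HnY : covering_number dY (eps / 2) nY) :
  robust l A (nG * nY) (cl * eps).
Proof.
  destruct HnG as [(CG & HCG & <-) _], HnY as [(CY & HCY & <-) _].
  destruct (cover_partition _ _ HdG _ _ HCG) as (cellG & HcellG & HdiamG).
  destruct (cover_partition _ _ HdY _ _ HCY) as (cellY & HcellY & HdiamY).
  intros S.
  exists (fun z => (cellG (fst z) * length CY + cellY (snd z))%nat).
  split.
  - intros [g y]. apply pair_code_lt; auto.
  - intros [g y] [g' y'] _ Hcell. simpl in *.
    destruct (pair_code_inj _ _ _ _ _ (HcellY y) (HcellY y') Hcell) as [Hg Hy].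
    assert (Hgg' : dG g g' < eps / cH).
    { replace (eps / cH) with (2 * (eps / (2 * cH))) by (field; lra). auto. }
    assert (Hxx' : dX (A S g) (A S g') < eps).
    { pose proof (lipschitz_lt _ _ _ _ _ _ _ HcH (HA S) Hgg') as Hx.
      now replace (cH * (eps / cH)) with eps in Hx by (field; lra). }
    assert (Hyy' : dY y y' < eps).
    { replace eps with (2 * (eps / 2)) by field. auto. }
    exact (lipschitz_lt _ _ _ _ _ _ _ Hcl Hl_lip (d_inf_lt _ _ _ _ _ _ _ Hxx' Hyy')).
Qed.
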